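(* Fix $\ell \in \mathbb{R}_{>0}$. The map $f \mapsto C(f)$ is one-to-one when restricted to barcodes of the form $f = \sum_{i=1}^n x^{\alpha_i}y^{\ell}$ (with $n\ge 0$ and $\alpha_i\in\mathbb{R}$ arbitrary), i.e. barcodes all of whose bars have lifespan $\ell$.
   Context: A barcode is a finite formal sum $f = \sum_{i=1}^n x^{\alpha_i}y^{\ell_i}$ with $\alpha_i \in \mathbb{R}$, $\ell_i \in \mathbb{R}_{>0}$ (a finite multiset of bars $x^{\alpha_i}y^{\ell_i}$). Its critical series is $C(f) = \sum_i x^{\alpha_i} - \sum_i x^{\alpha_i+\ell_i}$, a finite integer combination of symbols $x^g$, $g\in\mathbb{R}$. *)

From HB Require Import structures.
From mathcomp Require Import all_boot all_order all_algebra.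
From mathcomp Require Export reals.
Set Implicit Arguments. Unset Strict Implicit. Unset Printing Implicit Defensive.
Import Order.TTheory GRing.Theory Num.Theory.
Local Open Scope ring_scope.

(* A bar x^alpha y^ell is the pair (alpha, ell). A barcode is a finite
   multiset of bars, represented by a list of bars up to permutation
   (equality of barcodes = perm_eq), all of whose lifespans are positive. *)
Definition bar (R : realType) := (R * R)%type.

Definition is_barcode (R : realType) (f : seq (bar R)) : bool :=
  all (fun b => 0 < b.2) f.

(* The critical series C(f) = sum_i x^{alpha_i} - sum_i x^{alpha_i + ell_i},
   a finite integer combination of symbols x^g, represented by its
   coefficient function g |-> coefficient of x^g. *)
Definition crit (R : realType) (f : seq (bar R)) (g : R) : int :=
  (count (fun b : bar R => b.1 == g) f)%:Z
  - (count (fun b : bar R => b.1 + b.2 == g) f)%:Z.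

From mathcomp Require Import all_boot all_order all_algebra reals.
From mathcomp Require Import zify.

Set Implicit Arguments.
Unset Strict Implicit.
Unset Printing Implicit Defensive.
Import Order.TTheory GRing.Theory Num.Theory.
Local Open Scope ring_scope.

(* When every bar has lifespan l, the coefficient of x^g in C(f) is the number
   of births at g minus the number of births at g - l.  Hence the difference d
   of the birth multiplicities of two such barcodes with the same critical
   series satisfies d(g) = d(g - l).  A nonzero value of d would then propagate
   to the infinitely many points g - k l, while d is supported on the finitely
   many births: so d = 0, and the barcodes have the same births, hence coincide. *)

Lemma shift_closed_finite_pred0 (R : numDomainType) (l : R) (P : pred R)
    (s : seq R) :
  l != 0 -> (forall g, P g -> P (g - l)) -> {subset P <= s} ->
  forall g, ~~ P g.
Proof.
move=> l_neq0 PB Ps g; apply/negP => Pg.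
pose orbit := [seq g - k%:R * l | k <- iota 0 (size s).+1].
have orbit_uniq : uniq orbit.
  rewrite map_inj_uniq ?iota_uniq // => m n /addrI /oppr_inj /(mulIf l_neq0).
  by move/eqP; rewrite eqr_nat => /eqP.
have orbit_sub : {subset orbit <= s}.
  move=> _ /mapP[k _ ->]; apply: Ps; elim: k => [|k IHk].
    by rewrite mul0r subr0.
  by rewrite -addn1 natrD mulrDl mul1r opprD addrA; apply: PB.
by have := uniq_leq_size orbit_uniq orbit_sub; rewrite size_map size_iota ltnn.
Qed.

Lemma const_lifespan_unzip (S T : eqType) (l : T) (f : seq (S * T)) :
  all (fun b : S * T => b.2 == l) f -> f = [seq (a, l) | a <- unzip1 f].
Proof.
by elim: f => [|[a b] f IHf] //= /andP[/eqP -> /IHf {1}->].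
Qed.

Lemma crit_const_lifespan (R : realType) (l : R) (f : seq (bar R)) (g : R) :
  all (fun b : bar R => b.2 == l) f ->
  crit f g = (count_mem g (unzip1 f))%:Z - (count_mem (g - l) (unzip1 f))%:Z.
Proof.
move=> /allP f_l; rewrite /crit !count_map; congr (_%:Z - _%:Z).
apply: eq_in_count => b /f_l /eqP /= ->.
by rewrite (can2_eq (addrK l) (subrK l)).
Qed.

Theorem proposition11 (R : realType) (l : R) (hl : 0 < l)
    (f1 f2 : seq (bar R)) :
  is_barcode f1 -> is_barcode f2 ->
  all (fun b : bar R => b.2 == l) f1 ->
  all (fun b : bar R => b.2 == l) f2 ->
  crit f1 = crit f2 -> perm_eq f1 f2.
Proof.
move=> _ _ f1_l f2_l crit12.
pose d g := (count_mem g (unzip1 f1))%:Z - (count_mem g (unzip1 f2))%:Z.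
have d_periodic g : d g = d (g - l).
  move/(congr1 (fun F => F g)): crit12.
  rewrite (crit_const_lifespan _ f1_l) (crit_const_lifespan _ f2_l) /d.
  by move: (count_mem g _) (count_mem (g - l) _) (count_mem g _)
            (count_mem (g - l) _); lia.
have d_support : {subset [pred g | d g != 0] <= unzip1 f1 ++ unzip1 f2}.
  move=> g; rewrite inE mem_cat /d subr_eq0 -!has_pred1 !has_count.
  by case: (count _ _) => [|?]; case: (count _ _).
have d_shift g : d g != 0 -> d (g - l) != 0 by rewrite -d_periodic.
have d0 := shift_closed_finite_pred0 (lt0r_neq0 hl) d_shift d_support.
rewrite (const_lifespan_unzip f1_l) (const_lifespan_unzip f2_l).
by apply/perm_map/allP => g _; move: (d0 g); rewrite inE negbK subr_eq0.
Qed.
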